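(* For all even integers $n\ge2$ and real numbers $a\ge1$, $x\in(0,\pi)$, we have $S_{n,a}(x)\ge 2\sin(x)(1+\cos(x))$. Equality holds if and only if $n=2$, $a=1$ (any $x$), or $n=4$, $a=1$, $x=\pi/2$.
   Context: For a real number $a$ and integers $0\le m$, $\binom{m+a}{m}=\frac{(a+1)(a+2)\cdots(a+m)}{m!}$ (equal to $1$ when $m=0$). For an integer $n\ge1$, $S_{n,a}(x)=\sum_{j=1}^n\binom{n+a-j}{n-j}\sin(jx)$. *)

From Stdlib Require Import Reals Lra Lia Arith Factorial.
Open Scope R_scope.

Fixpoint rising (a : R) (m : nat) : R :=
  match m with
  | O => 1
  | S k => rising a k * (a + INR (S k))
  end.

(* binom(m+a, m) = (a+1)...(a+m)/m!, equal to 1 when m = 0. *)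
Definition gbinom (m : nat) (a : R) : R := rising a m / INR (fact m).

(* S_{n,a}(x) = sum_{j=1}^n binom(n+a-j, n-j) sin(j x). *)
Fixpoint Ssum (n j : nat) (a x : R) : R :=
  match j with
  | O => 0
  | S k => Ssum n k a x + gbinom (n - S k) a * sin (INR (S k) * x)
  end.

Definition S_na (n : nat) (a x : R) : R := Ssum n n a x.

(* Since binom(k+a, k) = sum_i binom(i+a-2, i) (k-i+1), the sum S_{n,a} is a
   combination, with coefficients binom(i+a-2, i) >= 0 for a >= 1, of the
   Fejer-type sums F_m(x) = sum_{k<m} (m-k) sin((k+1)x); its first two terms are
   F_n + (a-1) F_{n-1}, and all F_m (m >= 1) are positive on (0, pi).
   Telescoping gives 2(1 - cos x) F_m = (m+1) sin x - sin((m+1)x), so for n = 2p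
   the excess of F_n over 2 sin x (1 + cos x), multiplied by 2(1 - cos x), is
   H_p = (2p+1) sin x - sin((2p+1)x) - 4 sin^3 x.  Now H_1 = 0 and
   H_{p+1} = H_p + 4 sin x sin^2((p+1)x), so H_p >= 0, with H_p = 0 only for
   p = 1, or p = 2 and sin 2x = 0, i.e. x = pi/2. *)
From Stdlib Require Import Reals Lra Lia Factorial.
Open Scope R_scope.

Fixpoint rsum (n : nat) (f : nat -> R) : R :=
  match n with O => 0 | S k => rsum k f + f k end.

Lemma rsum_ext n f g : (forall i, (i < n)%nat -> f i = g i) -> rsum n f = rsum n g.
Proof.
  induction n as [|n IH]; intros Hfg; cbn [rsum]; [reflexivity|].
  rewrite IH by (intros; apply Hfg; lia). rewrite Hfg by lia. reflexivity.
Qed.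

Lemma rsum_add n f g : rsum n (fun i => f i + g i) = rsum n f + rsum n g.
Proof. induction n as [|n IH]; cbn [rsum]; [lra|]. rewrite IH; lra. Qed.

Lemma rsum_scal_l n c f : rsum n (fun i => c * f i) = c * rsum n f.
Proof. induction n as [|n IH]; cbn [rsum]; [lra|]. rewrite IH; lra. Qed.

Lemma rsum_nonneg n f : (forall i, (i < n)%nat -> 0 <= f i) -> 0 <= rsum n f.
Proof.
  induction n as [|n IH]; intros Hf; cbn [rsum]; [lra|].
  assert (0 <= rsum n f) by (apply IH; intros; apply Hf; lia).
  assert (0 <= f n) by (apply Hf; lia). lra.
Qed.

Lemma rsum_eq0 n f : (forall i, (i < n)%nat -> f i = 0) -> rsum n f = 0.
Proof.
  intros Hf. rewrite (rsum_ext n f (fun i => 0 * 0)) by (intros i Hi; rewrite Hf by exact Hi; ring).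
  rewrite rsum_scal_l. ring.
Qed.

Lemma rsum_first n f : rsum (S n) f = f O + rsum n (fun i => f (S i)).
Proof. induction n as [|n IH]; cbn [rsum] in *; [lra|]. rewrite IH. lra. Qed.

Lemma rsum_swap n m (f : nat -> nat -> R) :
  rsum n (fun i => rsum m (fun j => f i j)) = rsum m (fun j => rsum n (fun i => f i j)).
Proof.
  induction n as [|n IH]; cbn [rsum].
  - symmetry. apply rsum_eq0. reflexivity.
  - rewrite rsum_add, IH. reflexivity.
Qed.

Lemma rsum_extend m n f : (m <= n)%nat ->
  rsum m f = rsum n (fun i => if Nat.ltb i m then f i else 0).
Proof.
  intros Hmn. induction n as [|n IH].
  - replace m with O by lia. reflexivity.
  - destruct (Nat.eq_dec m (S n)) as [->|Hm].
    + apply rsum_ext; intros i Hi. destruct (Nat.ltb_spec i (S n)); [reflexivity|lia].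
    + cbn [rsum]. rewrite IH by lia. destruct (Nat.ltb_spec n m); [lia|lra].
Qed.

Lemma rsum_triangle_swap n (g : nat -> nat -> R) :
  rsum n (fun k => rsum (n - k) (fun i => g i k)) =
  rsum n (fun i => rsum (n - i) (fun k => g i k)).
Proof.
  transitivity (rsum n (fun k => rsum n (fun i => if Nat.ltb (i + k) n then g i k else 0))).
  - apply rsum_ext; intros k Hk. rewrite (rsum_extend (n - k) n) by lia.
    apply rsum_ext; intros i Hi.
    destruct (Nat.ltb_spec i (n - k)), (Nat.ltb_spec (i + k) n); reflexivity || lia.
  - rewrite rsum_swap. apply rsum_ext; intros i Hi. rewrite (rsum_extend (n - i) n) by lia.
    apply rsum_ext; intros k Hk.
    destruct (Nat.ltb_spec k (n - i)), (Nat.ltb_spec (i + k) n); reflexivity || lia.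
Qed.

Lemma rising_succ_shift c m : rising c (S m) = (c + 1) * rising (c + 1) m.
Proof.
  induction m as [|m IH]; [simpl; ring|].
  change (rising c (S (S m))) with (rising c (S m) * (c + INR (S (S m)))).
  change (rising (c + 1) (S m)) with (rising (c + 1) m * (c + 1 + INR (S m))).
  rewrite IH, (S_INR (S m)). ring.
Qed.

Lemma rising_nonneg c m : -1 <= c -> 0 <= rising c m.
Proof.
  intros Hc. induction m as [|m IH]; [simpl; lra|].
  change (rising c (S m)) with (rising c m * (c + INR (S m))).
  apply Rmult_le_pos; [exact IH|]. rewrite S_INR. pose proof (pos_INR m). lra.
Qed.

Lemma gbinom_0 b : gbinom 0 b = 1.
Proof. unfold gbinom; simpl; field. Qed.

Lemma gbinom_1 b : gbinom 1 b = b + 1.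
Proof. unfold gbinom; simpl; field. Qed.

Lemma gbinom_nonneg m b : -1 <= b -> 0 <= gbinom m b.
Proof.
  intros Hb. unfold gbinom. apply Rmult_le_pos; [now apply rising_nonneg|].
  apply Rlt_le, Rinv_0_lt_compat, INR_fact_lt_0.
Qed.

Lemma gbinom_succ_neg1 m : gbinom (S m) (-1) = 0.
Proof.
  unfold gbinom. rewrite rising_succ_shift. replace (-1 + 1) with 0 by ring.
  unfold Rdiv. ring.
Qed.

Lemma gbinom_pascal m b : gbinom (S m) b = gbinom m b + gbinom (S m) (b - 1).
Proof.
  unfold gbinom. rewrite (rising_succ_shift (b - 1)). replace (b - 1 + 1) with b by ring.
  change (rising b (S m)) with (rising b m * (b + INR (S m))).
  change (fact (S m)) with (S m * fact m)%nat. rewrite mult_INR.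
  pose proof (INR_fact_neq_0 m).
  assert (INR (S m) <> 0) by (apply not_0_INR; lia).
  field; auto.
Qed.

Lemma gbinom_hockey_stick k b : rsum (S k) (fun i => gbinom i (b - 1)) = gbinom k b.
Proof.
  induction k as [|k IH].
  - cbn [rsum]. rewrite !gbinom_0. ring.
  - change (rsum (S (S k)) (fun i => gbinom i (b - 1)))
      with (rsum (S k) (fun i => gbinom i (b - 1)) + gbinom (S k) (b - 1)).
    rewrite IH, (gbinom_pascal k b). reflexivity.
Qed.

Lemma gbinom_convolution k b :
  rsum (S k) (fun i => gbinom i (b - 2) * INR (S k - i)) = gbinom k b.
Proof.
  replace (b - 2) with (b - 1 - 1) by ring.
  induction k as [|k IH].
  - cbn [rsum]. rewrite !gbinom_0. simpl. ring.
  - change (rsum (S (S k)) (fun i => gbinom i (b - 1 - 1) * INR (S (S k) - i)))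
      with (rsum (S k) (fun i => gbinom i (b - 1 - 1) * INR (S (S k) - i))
            + gbinom (S k) (b - 1 - 1) * INR (S (S k) - S k)).
    rewrite (rsum_ext _ _
      (fun i => gbinom i (b - 1 - 1) * INR (S k - i) + gbinom i (b - 1 - 1))).
    2: { intros i Hi. replace (S (S k) - i)%nat with (S (S k - i)) by lia.
         rewrite S_INR. ring. }
    rewrite rsum_add, IH, gbinom_hockey_stick.
    rewrite (gbinom_pascal k b), (gbinom_pascal k (b - 1)).
    replace (S (S k) - S k)%nat with 1%nat by lia. simpl INR. ring.
Qed.

Definition sin_sum (x : R) (m : nat) : R := rsum m (fun k => sin (INR (S k) * x)).

Definition fejer (x : R) (m : nat) : R := rsum m (fun k => INR (m - k) * sin (INR (S k) * x)).

Lemma sin_sum_closed_form x m :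
  2 * (1 - cos x) * sin_sum x m = sin x + sin (INR m * x) - sin (INR (S m) * x).
Proof.
  induction m as [|m IH].
  - unfold sin_sum; cbn [rsum]. simpl INR. rewrite Rmult_0_l, sin_0, Rmult_1_l. ring.
  - unfold sin_sum in *; cbn [rsum]. rewrite Rmult_plus_distr_l, IH.
    set (u := INR (S m) * x).
    replace (INR (S (S m)) * x) with (u + x) by (unfold u; rewrite (S_INR (S m)); ring).
    replace (INR m * x) with (u - x) by (unfold u; rewrite S_INR; ring).
    rewrite sin_plus, sin_minus. ring.
Qed.

Lemma fejer_succ x m : fejer x (S m) = fejer x m + sin_sum x (S m).
Proof.
  unfold fejer, sin_sum. cbn [rsum].
  rewrite (rsum_ext m _ (fun k => INR (m - k) * sin (INR (S k) * x) + sin (INR (S k) * x))).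
  - rewrite rsum_add. replace (S m - m)%nat with 1%nat by lia. simpl INR. ring.
  - intros k Hk. replace (S m - k)%nat with (S (m - k)) by lia. rewrite S_INR. ring.
Qed.

Lemma fejer_closed_form x m :
  2 * (1 - cos x) * fejer x m = (INR m + 1) * sin x - sin ((INR m + 1) * x).
Proof.
  induction m as [|m IH].
  - unfold fejer; cbn [rsum]. simpl INR. replace ((0 + 1) * x) with x by ring. ring.
  - rewrite fejer_succ, Rmult_plus_distr_l, IH, sin_sum_closed_form, !S_INR. ring.
Qed.

Lemma cos_open_bounds x : 0 < x < PI -> -1 < cos x < 1.
Proof.
  intros Hx. pose proof (sin_gt_0 x (proj1 Hx) (proj2 Hx)).
  pose proof (sin2_cos2 x). pose proof (COS_bound x). unfold Rsqr in *. split; nra.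
Qed.

Lemma Rabs_sin_mult_lt k x :
  (2 <= k)%nat -> 0 < x < PI -> Rabs (sin (INR k * x)) < INR k * sin x.
Proof.
  intros Hk Hx. pose proof (sin_gt_0 x (proj1 Hx) (proj2 Hx)) as Hs.
  pose proof (cos_open_bounds x Hx) as Hc.
  destruct k as [|[|k]]; try lia. clear Hk. induction k as [|k IH].
  - replace (INR 2 * x) with (2 * x) by (simpl; ring). rewrite sin_2a.
    simpl INR. apply Rabs_def1; nra.
  - set (u := INR (S (S k)) * x) in IH.
    replace (INR (S (S (S k))) * x) with (u + x) by (unfold u; rewrite (S_INR (S (S k))); ring).
    rewrite (S_INR (S (S k))), sin_plus.
    pose proof (Rabs_triang (sin u * cos x) (cos u * sin x)) as Htri.
    rewrite !Rabs_mult, (Rabs_pos_eq (sin x)) in Htri by lra.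
    assert (Rabs (cos x) <= 1) by (apply Rabs_le; lra).
    assert (Rabs (cos u) <= 1) by (apply Rabs_le, COS_bound).
    pose proof (Rabs_pos (sin u)). pose proof (Rabs_pos (cos u)).
    nra.
Qed.

Lemma fejer_pos x m : 0 < x < PI -> (1 <= m)%nat -> 0 < fejer x m.
Proof.
  intros Hx Hm. pose proof (cos_open_bounds x Hx).
  pose proof (fejer_closed_form x m) as Hcf.
  replace (INR m + 1) with (INR (S m)) in Hcf by (rewrite S_INR; ring).
  pose proof (Rabs_sin_mult_lt (S m) x ltac:(lia) Hx).
  pose proof (Rle_abs (sin (INR (S m) * x))).
  nra.
Qed.

Lemma fejer_nonneg x m : 0 < x < PI -> 0 <= fejer x m.
Proof.
  intros Hx. destruct m as [|m]; [unfold fejer; simpl; lra|].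
  apply Rlt_le, fejer_pos; [exact Hx | lia].
Qed.

Definition fejer_excess (x : R) (p : nat) : R :=
  (2 * INR p + 1) * sin x - sin ((2 * INR p + 1) * x) - 4 * sin x ^ 3.

Lemma fejer_excess_spec x p :
  2 * (1 - cos x) * (fejer x (2 * p) - 2 * sin x * (1 + cos x)) = fejer_excess x p.
Proof.
  rewrite Rmult_minus_distr_l, fejer_closed_form. unfold fejer_excess.
  rewrite mult_INR. replace (INR 2) with 2 by (simpl; ring).
  pose proof (sin2_cos2 x) as Hsc. unfold Rsqr in Hsc.
  replace (cos x ^ 2) with (1 - sin x ^ 2) by lra. ring_simplify.
  replace (cos x ^ 2) with (1 - sin x ^ 2) by lra. ring.
Qed.

Lemma fejer_excess_succ x p :
  fejer_excess x (S p) = fejer_excess x p + 4 * sin x * sin (INR (S p) * x) ^ 2.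
Proof.
  unfold fejer_excess. rewrite S_INR.
  set (u := 2 * ((INR p + 1) * x)).
  replace ((2 * (INR p + 1) + 1) * x) with (u + x) by (unfold u; ring).
  replace ((2 * INR p + 1) * x) with (u - x) by (unfold u; ring).
  rewrite sin_plus, sin_minus. unfold u. rewrite cos_2a_sin. ring.
Qed.

Lemma fejer_excess_1 x : fejer_excess x 1 = 0.
Proof.
  unfold fejer_excess. simpl INR. replace ((2 * 1 + 1) * x) with (2 * x + x) by ring.
  rewrite sin_plus, sin_2a, cos_2a_sin.
  pose proof (sin2_cos2 x) as Hsc. unfold Rsqr in Hsc.
  transitivity (2 * sin x * (1 - (sin x * sin x + cos x * cos x))); [ring|].
  rewrite Hsc. ring.
Qed.

Lemma fejer_excess_2 x : fejer_excess x 2 = 4 * sin x * sin (2 * x) ^ 2.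
Proof.
  change 2%nat with (S 1). rewrite fejer_excess_succ, fejer_excess_1.
  replace (INR 2 * x) with (2 * x) by (simpl; ring). ring.
Qed.

Lemma fejer_excess_le x p q : 0 < x < PI -> (p <= q)%nat ->
  fejer_excess x p <= fejer_excess x q.
Proof.
  intros Hx Hpq. pose proof (sin_gt_0 x (proj1 Hx) (proj2 Hx)).
  induction Hpq as [|q Hpq IH]; [lra|].
  rewrite fejer_excess_succ. nra.
Qed.

Lemma fejer_excess_nonneg x p : 0 < x < PI -> (1 <= p)%nat -> 0 <= fejer_excess x p.
Proof.
  intros Hx Hp. rewrite <- (fejer_excess_1 x). now apply fejer_excess_le.
Qed.

Lemma fejer_excess_3_pos x : 0 < x < PI -> 0 < fejer_excess x 3.
Proof.
  intros Hx. pose proof (sin_gt_0 x (proj1 Hx) (proj2 Hx)).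
  change 3%nat with (S 2). rewrite fejer_excess_succ, fejer_excess_2.
  replace (INR 3 * x) with (2 * x + x) by (simpl; ring).
  (* sin 2x and sin 3x cannot vanish together: if sin 2x = 0 then sin 3x = cos 2x sin x = +-sin x. *)
  assert (0 < sin (2 * x) ^ 2 + sin (2 * x + x) ^ 2).
  { rewrite sin_plus. pose proof (sin2_cos2 (2 * x)). unfold Rsqr in *.
    destruct (Req_dec (sin (2 * x)) 0) as [E|E].
    - rewrite E. assert (cos (2 * x) * cos (2 * x) = 1) by nra. nra.
    - pose proof (pow2_ge_0 (sin (2 * x) * cos x + cos (2 * x) * sin x)).
      assert (0 < sin (2 * x) ^ 2) by (simpl; rewrite Rmult_1_r; now apply Rsqr_pos_lt).
      lra. }
  nra.
Qed.

Lemma fejer_excess_eq0 x p : 0 < x < PI -> (1 <= p)%nat ->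
  fejer_excess x p = 0 <-> p = 1%nat \/ (p = 2%nat /\ x = PI / 2).
Proof.
  intros Hx Hp. pose proof (sin_gt_0 x (proj1 Hx) (proj2 Hx)). split.
  - intros H0. destruct (Nat.le_gt_cases p 2) as [Hp2|Hp3].
    + destruct (Nat.eq_dec p 1) as [|Hp1]; [now left|]. right.
      replace p with 2%nat in * by lia. split; [reflexivity|].
      rewrite fejer_excess_2 in H0.
      assert (Hs2 : sin (2 * x) = 0).
      { destruct (Req_dec (sin (2 * x)) 0) as [|Hne]; [assumption|].
        exfalso. apply (pow_nonzero _ 2 Hne). apply (Rmult_eq_reg_l (4 * sin x)); lra. }
      rewrite sin_2a in Hs2.
      assert (Hc : cos x = 0) by (apply (Rmult_eq_reg_l (2 * sin x)); lra).
      pose proof PI_RGT_0. apply cos_inj; [lra | lra |]. now rewrite cos_PI2.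
    + pose proof (fejer_excess_le x 3 p Hx Hp3). pose proof (fejer_excess_3_pos x Hx). lra.
  - intros [-> | [-> ->]]; [apply fejer_excess_1|].
    rewrite fejer_excess_2. replace (2 * (PI / 2)) with PI by field. rewrite sin_PI. ring.
Qed.

Lemma fejer_even_ge x p : 0 < x < PI -> (1 <= p)%nat ->
  fejer x (2 * p) >= 2 * sin x * (1 + cos x).
Proof.
  intros Hx Hp. pose proof (cos_open_bounds x Hx).
  pose proof (fejer_excess_spec x p). pose proof (fejer_excess_nonneg x p Hx Hp).
  assert (0 <= fejer x (2 * p) - 2 * sin x * (1 + cos x)); [|lra].
  apply (Rmult_le_reg_l (2 * (1 - cos x))); lra.
Qed.

Lemma fejer_even_eq_iff x p : 0 < x < PI -> (1 <= p)%nat ->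
  fejer x (2 * p) = 2 * sin x * (1 + cos x) <-> p = 1%nat \/ (p = 2%nat /\ x = PI / 2).
Proof.
  intros Hx Hp. pose proof (cos_open_bounds x Hx). pose proof (fejer_excess_spec x p).
  rewrite <- fejer_excess_eq0 by assumption. split; intros E; nra.
Qed.

Lemma S_na_fejer_decomposition n a x :
  S_na n a x = rsum n (fun i => gbinom i (a - 2) * fejer x (n - i)).
Proof.
  assert (Hsum : forall j,
    Ssum n j a x = rsum j (fun k => gbinom (n - S k) a * sin (INR (S k) * x))).
  { induction j as [|j IH]; cbn [Ssum rsum]; [reflexivity|]. now rewrite IH. }
  unfold S_na. rewrite Hsum.
  rewrite (rsum_ext n _ (fun k => rsum (n - k) (fun i =>
             gbinom i (a - 2) * INR (n - k - i) * sin (INR (S k) * x)))).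
  2: { intros k Hk. rewrite <- (gbinom_convolution (n - S k) a).
       replace (S (n - S k)) with (n - k)%nat by lia.
       rewrite <- (Rmult_comm (sin (INR (S k) * x))), <- rsum_scal_l.
       apply rsum_ext; intros i Hi. ring. }
  rewrite rsum_triangle_swap. apply rsum_ext; intros i Hi.
  unfold fejer. rewrite <- rsum_scal_l. apply rsum_ext; intros k Hk.
  replace (n - k - i)%nat with (n - i - k)%nat by lia. ring.
Qed.

Lemma S_na_ge_fejer n a x : (2 <= n)%nat -> 1 <= a -> 0 < x < PI ->
  S_na n a x >= fejer x n + (a - 1) * fejer x (pred n).
Proof.
  intros Hn Ha Hx. destruct n as [|[|m]]; try lia.
  rewrite S_na_fejer_decomposition, rsum_first, rsum_first.
  rewrite gbinom_0, gbinom_1. replace (a - 2 + 1) with (a - 1) by ring.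
  simpl pred. replace (S (S m) - 0)%nat with (S (S m)) by lia.
  replace (S (S m) - 1)%nat with (S m) by lia.
  assert (0 <= rsum m (fun i => gbinom (S (S i)) (a - 2) * fejer x (S (S m) - S (S i)))).
  { apply rsum_nonneg; intros i Hi.
    apply Rmult_le_pos; [apply gbinom_nonneg; lra | now apply fejer_nonneg]. }
  lra.
Qed.

Lemma S_na_1 n x : S_na n 1 x = fejer x n.
Proof.
  rewrite S_na_fejer_decomposition. replace (1 - 2) with (-1) by ring.
  destruct n as [|n]; [reflexivity|].
  rewrite rsum_first, gbinom_0, rsum_eq0.
  - replace (S n - 0)%nat with (S n) by lia. ring.
  - intros i Hi. rewrite gbinom_succ_neg1. ring.
Qed.

Theorem theorem3p2 (n : nat) (a x : R) :
  (2 <= n)%nat -> Nat.Even n -> 1 <= a -> 0 < x < PI ->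
  S_na n a x >= 2 * sin x * (1 + cos x) /\
  (S_na n a x = 2 * sin x * (1 + cos x) <->
     ((n = 2%nat /\ a = 1) \/ (n = 4%nat /\ a = 1 /\ x = PI / 2))).
Proof.
  intros Hn [p ->] Ha Hx.
  assert (Hp : (1 <= p)%nat) by lia.
  pose proof (S_na_ge_fejer (2 * p) a x Hn Ha Hx) as HS.
  pose proof (fejer_even_ge x p Hx Hp) as Hfe.
  pose proof (fejer_pos x (pred (2 * p)) Hx ltac:(lia)) as Hpos.
  split; [nra|]. split.
  - intros E. assert (Ha1 : a = 1) by nra. subst a.
    rewrite S_na_1, fejer_even_eq_iff in E by assumption.
    destruct E as [-> | [-> ->]]; [left | right]; auto.
  - intros H. assert (Ha1 : a = 1) by (destruct H as [[_ ?] | [_ [? _]]]; assumption).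
    subst a. rewrite S_na_1, fejer_even_eq_iff by assumption.
    destruct H as [[H _] | [H [_ ->]]]; [left | right; split; [|reflexivity]]; lia.
Qed.
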